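(* Let $A,A^*\in\mathrm{Mat}_{d+1}(\mathbb K)$ be as in the setup below. Then $A,A^*$ is a Leonard pair if and only if there exists an invertible $H\in\mathrm{Mat}_{d+1}(\mathbb K)$ such that $H^{-1}A^tH=A$ and $H^{-1}A^{*t}H=A^*$, where ${}^t$ denotes transpose.
   Context: Let $\mathbb K$ be a field and $d\ge0$ an integer; rows/columns are indexed $0,\ldots,d$. Let $\theta_0,\ldots,\theta_d\in\mathbb K$ be mutually distinct, $\theta^*_0,\ldots,\theta^*_d\in\mathbb K$ mutually distinct, and $\varphi_1,\ldots,\varphi_d\in\mathbb K$ nonzero. Let $A\in\mathrm{Mat}_{d+1}(\mathbb K)$ be lower bidiagonal with $A_{ii}=\theta_i$, $A_{i+1,i}=1$ and all other entries $0$; let $A^*$ be upper bidiagonal with $A^*_{ii}=\theta^*_i$, $A^*_{i-1,i}=\varphi_i$ and all other entries $0$ ($A^*$ is just a name, not an adjoint). A square matrix is tridiagonal if every nonzero entry lies on the diagonal, subdiagonal or superdiagonal, and irreducible tridiagonal if moreover all sub- and superdiagonal entries are nonzero. $A,A^*$ is a Leonard pair if there is a basis of $\mathbb K^{d+1}$ in which $A$ is represented by an irreducible tridiagonal matrix and $A^*$ by a diagonal one, and a basis in which $A^*$ is irreducible tridiagonal and $A$ diagonal. *)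

From HB Require Import structures.
From mathcomp Require Import all_boot all_order all_algebra.
Set Implicit Arguments. Unset Strict Implicit. Unset Printing Implicit Defensive.
Import GRing.Theory.
Local Open Scope ring_scope.

(* Indices 0..d are 'I_d.+1. Matrices act on column vectors; the matrix
   representing M in the basis given by the columns of an invertible P
   is  invmx P *m M *m P. *)

Definition matA (K : fieldType) (d : nat) (theta : 'I_d.+1 -> K) : 'M[K]_d.+1 :=
  \matrix_(i, j) (if i == j then theta i
                  else if (i : nat) == j.+1 then 1 else 0).

(* Upper bidiagonal A*: A*_ii = thetas_i, A*_{i-1,i} = phi_i (phi indexed 1..d). *)
Definition matAs (K : fieldType) (d : nat) (thetas : 'I_d.+1 -> K)
    (phi : nat -> K) : 'M[K]_d.+1 :=
  \matrix_(i, j) (if i == j then thetas i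
                  else if (j : nat) == i.+1 then phi j else 0).

Definition tridiagonal (K : fieldType) (n : nat) (M : 'M[K]_n) : Prop :=
  forall i j : 'I_n, (j.+1 < i)%N \/ (i.+1 < j)%N -> M i j = 0.

Definition irreducible_tridiagonal (K : fieldType) (n : nat) (M : 'M[K]_n) : Prop :=
  tridiagonal M /\
  forall i j : 'I_n, (i : nat) = j.+1 -> M i j != 0 /\ M j i != 0.

Definition diagonal (K : fieldType) (n : nat) (M : 'M[K]_n) : Prop :=
  is_diag_mx M.

Definition leonard_pair (K : fieldType) (n : nat) (A As : 'M[K]_n) : Prop :=
  (exists P : 'M[K]_n, P \in unitmx /\
     irreducible_tridiagonal (invmx P *m A *m P) /\ diagonal (invmx P *m As *m P)) /\
  (exists Q : 'M[K]_n, Q \in unitmx /\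
     irreducible_tridiagonal (invmx Q *m As *m Q) /\ diagonal (invmx Q *m A *m Q)).

From HB Require Import structures.
From mathcomp Require Import all_boot all_order all_algebra.
From mathcomp Require Import zify ring.
Import GRing.Theory.
Local Open Scope ring_scope.
Set Implicit Arguments. Unset Strict Implicit. Unset Printing Implicit Defensive.

(* If P^-1 A P = T is irreducible tridiagonal and P^-1 A* P is diagonal, then
   T^t S = S T for the invertible diagonal matrix S with S_{i+1}/S_i =
   T_{i,i+1}/T_{i+1,i}, and H = P^-t S P^-1 works for both A and A*.
   Conversely, A* is upper triangular with distinct diagonal entries, hence is
   diagonalised by an upper triangular P.  Then G = P^t H P commutes with the
   diagonal matrix P^-1 A* P, whose entries are distinct, so G is diagonal; and
   T = P^-1 A P is upper Hessenberg with nonzero subdiagonal because A is.  The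
   relation T^t G = G T, i.e. G_ii T_ij = T_ji G_jj, then forces T to be
   irreducible tridiagonal.  The second basis comes from the same argument for
   A^t, A*^t and H^-1. *)

Section LowerBand.
Variables (K : fieldType) (n : nat).
Implicit Types (M N U : 'M[K]_n) (v : 'cV[K]_n).

(* [lower_band 0] is upper triangular, [lower_band 1] upper Hessenberg. *)
Definition lower_band (b : nat) M := forall i j : 'I_n, (j + b < i)%N -> M i j = 0.

Lemma lower_band_mul b c M N :
  lower_band b M -> lower_band c N -> lower_band (b + c) (M *m N).
Proof.
move=> bM cN i j ltji; rewrite mxE big1 // => k _.
have [ltki | leik] := ltnP (k + b) i; first by rewrite bM ?mul0r.
by rewrite cN ?mulr0 //; lia.
Qed.

Lemma lower_band_mul_edge b c M N (i k j : 'I_n) :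
  lower_band b M -> lower_band c N -> i = (k + b)%N :> nat -> k = (j + c)%N :> nat ->
  (M *m N) i j = M i k * N k j.
Proof.
move=> bM cN ik kj; rewrite mxE (big_only1 k) // => m nmk _.
case: (ltngtP m k) => [ltmk | ltkm | /val_inj eqmk]; last by rewrite eqmk eqxx in nmk.
- by rewrite bM ?mul0r //; lia.
- by rewrite cN ?mulr0 //; lia.
Qed.

Lemma det_lower_band0 U : lower_band 0 U -> \det U = \prod_i U i i.
Proof.
move=> U0; rewrite -det_tr det_trig.
  by apply: eq_bigr => i _; rewrite mxE.
by apply/is_trig_mxP => i j ltij; rewrite mxE U0 ?addn0.
Qed.

Lemma lower_band0_unitmxP U :
  lower_band 0 U -> reflect (forall i, U i i != 0) (U \in unitmx).
Proof.
move=> U0; rewrite unitmxE unitfE det_lower_band0 //.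
apply: (iffP idP) => [/prodf_neq0 nzU i | nzU]; first exact: nzU.
by apply/prodf_neq0 => i _; apply: nzU.
Qed.

Lemma lower_band0_mul_col U v (k : 'I_n) : lower_band 0 U ->
  (forall m : 'I_n, (k < m)%N -> v m 0 = 0) -> (U *m v) k 0 = U k k * v k 0.
Proof.
move=> U0 vk; rewrite mxE (big_only1 k) // => m nmk _.
case: (ltngtP m k) => [ltmk | ltkm | /val_inj eqmk]; last by rewrite eqmk eqxx in nmk.
- by rewrite U0 ?mul0r ?addn0.
- by rewrite vk ?mulr0.
Qed.

Lemma col_last_nonzero v (j : 'I_n) : v j 0 != 0 ->
  exists k : 'I_n, [/\ (j <= k)%N, v k 0 != 0 & forall m : 'I_n, (k < m)%N -> v m 0 = 0].
Proof.
move=> nzj; case: (@arg_maxnP _ j (fun k => v k 0 != 0) val nzj) => k nzk maxk.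
exists k; split=> // [|m ltkm]; first exact: maxk.
by apply/eqP; apply: contraTT ltkm => /maxk; rewrite -leqNgt.
Qed.

Lemma lower_band0_invmx U : lower_band 0 U -> U \in unitmx -> lower_band 0 (invmx U).
Proof.
(* The last nonzero entry of column [l] of [U^-1] below the diagonal would
   survive in column [l] of [U U^-1 = 1]. *)
move=> U0 uU i l; rewrite addn0 => ltli; apply/eqP; apply/negP => /negP nzi.
have nzcol : col l (invmx U) i 0 != 0 by rewrite mxE.
have [k [leik nzk lastk]] := col_last_nonzero nzcol.
have := lower_band0_mul_col U0 lastk.
have nkl : k != l by rewrite -val_eqE /= gtn_eqF // (leq_trans ltli leik).
rewrite {1}colE mulmxA mulmxV // mul1mx mxE (negPf nkl).
move/esym/eqP; rewrite mulf_eq0 (negPf nzk) orbF.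
by rewrite (negPf (lower_band0_unitmxP U0 uU k)).
Qed.

Lemma lower_band0_eigenvector X (j : 'I_n) :
  lower_band 0 X -> injective (fun i => X i i) ->
  exists v : 'cV[K]_n,
    [/\ X *m v = X j j *: v, v j 0 != 0 & forall m : 'I_n, (j < m)%N -> v m 0 = 0].
Proof.
move=> X0 injX; set M := X - (X j j)%:M.
have M0 : lower_band 0 M.
  move=> a b; rewrite addn0 => ltba.
  rewrite !mxE (X0 a b) ?addn0 //.
  have /negPf-> : a != b by apply: contraTneq ltba => ->; rewrite ltnn.
  by rewrite mulr0n subrr.
have detM : \det M^T == 0.
  rewrite det_tr det_lower_band0 //; apply/prodf_eq0; exists j => //.
  by rewrite !mxE eqxx mulr1n subrr.
have [w nzw wM] := det0P detM; set v := w^T.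
have Mv : M *m v = 0 by rewrite -[M]trmxK -trmx_mul wM trmx0.
have [i0 nzi0] : exists i0, v i0 0 != 0.
  apply/existsP; apply: contraNT nzw => /existsPn zv.
  by apply/eqP/matrixP => a b; have := zv b; rewrite [a]ord1 !mxE negbK => /eqP.
(* The last nonzero entry [k] of a kernel vector of [X - X_jj] forces
   [X_kk = X_jj]. *)
have [k [_ nzk lastk]] := col_last_nonzero nzi0.
have Mkk : M k k = 0.
  have := lower_band0_mul_col M0 lastk; rewrite Mv mxE => /esym/eqP.
  by rewrite mulf_eq0 (negPf nzk) orbF => /eqP.
have ekj : k = j by apply: injX; move/eqP: Mkk; rewrite !mxE eqxx mulr1n subr_eq0 => /eqP.
subst k; exists v; split=> //.
by apply/eqP; rewrite -subr_eq0 -mul_scalar_mx -mulmxBl Mv.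
Qed.

Lemma lower_band0_diagonalize X : lower_band 0 X -> injective (fun i => X i i) ->
  exists P, [/\ lower_band 0 P, P \in unitmx & X *m P = P *m diag_mx (\row_i X i i)].
Proof.
move=> X0 injX.
have [f eigf] := fin_all_exists (fun j => lower_band0_eigenvector j X0 injX).
pose P := \matrix_(i, j) f j i 0.
have P0 : lower_band 0 P.
  by move=> i j; rewrite addn0 mxE => ltji; have [_ _ ->] := eigf j.
exists P; split => //.
  by apply/(lower_band0_unitmxP P0) => i; rewrite mxE; have [] := eigf i.
apply/matrixP => i j; rewrite mul_mx_diag !mxE.
have [fj _ _] := eigf j; have := congr1 (fun w : 'cV[K]_n => w i 0) fj.
by rewrite !mxE mulrC => <-; apply: eq_bigr => m _; rewrite mxE.
Qed.

End LowerBand.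

Section Symmetrizer.
Variables (K : fieldType) (n : nat).
Implicit Types (H G P X Y T : 'M[K]_n).

(* The relation [H^-1 X^t H = X] with [H] multiplied out; [H] itself need not
   be symmetric. *)
Definition symmetrizer H X := X^T *m H = H *m X.

Definition tridiag_diag_basis Y X P := P \in unitmx /\
  irreducible_tridiagonal (invmx P *m Y *m P) /\ diagonal (invmx P *m X *m P).

Lemma symmetrizerE H X :
  H \in unitmx -> invmx H *m X^T *m H = X <-> symmetrizer H X.
Proof.
move=> uH; split => [E | XH].
  by rewrite /symmetrizer -{2}E !mulmxA mulmxV // mul1mx.
by rewrite -mulmxA XH mulmxA mulVmx // mul1mx.
Qed.

Lemma symmetrizer_conj P H X : P \in unitmx -> symmetrizer H X ->
  symmetrizer (P^T *m H *m P) (invmx P *m X *m P).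
Proof.
move=> uP XH; rewrite /symmetrizer !trmx_mul -!mulmxA (mulmxA (invmx P)^T).
rewrite -trmx_mul mulmxV // trmx1 mul1mx (mulmxA X^T) XH.
by rewrite !mulmxA -(mulmxA _ P) mulmxV // mulmx1.
Qed.

Lemma symmetrizer_inv H X :
  H \in unitmx -> symmetrizer H X -> symmetrizer (invmx H) X^T.
Proof.
move=> uH XH; rewrite /symmetrizer trmxK.
have := congr1 (fun M => invmx H *m M *m invmx H) XH.
by rewrite /= !mulmxA mulVmx // mul1mx -!mulmxA mulmxV // mulmx1 => ->.
Qed.

Lemma diag_symmetrizer (s : 'rV[K]_n) X : is_diag_mx X -> symmetrizer (diag_mx s) X.
Proof.
move/is_diag_mxP => Xd; apply/matrixP => i j; rewrite mul_mx_diag mul_diag_mx !mxE.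
have [<- | nij] := eqVneq i j; first by rewrite mulrC.
by rewrite !Xd ?mulr0 ?mul0r // eq_sym.
Qed.

Lemma diag_symmetrizerE G T : is_diag_mx G -> symmetrizer G T ->
  forall i j, G i i * T i j = T j i * G j j.
Proof.
move=> /is_diag_mxP Gd; rewrite /symmetrizer => TG i j.
have := congr1 (fun M : 'M[K]_n => M i j) TG.
rewrite !mxE (big_only1 j) // => [|m nmj _]; last by rewrite Gd ?mulr0.
rewrite (big_only1 i) // => [|m nmi _]; last by rewrite Gd ?mul0r // eq_sym.
by rewrite mxE => ->.
Qed.

Lemma commmx_diag_is_diag (d : 'rV[K]_n) G : injective (d 0) ->
  diag_mx d *m G = G *m diag_mx d -> is_diag_mx G.
Proof.
move=> injd dG; apply/is_diag_mxP => i j nij.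
have := congr1 (fun M : 'M[K]_n => M i j) dG.
rewrite mul_diag_mx mul_mx_diag !mxE mulrC => /eqP.
rewrite -subr_eq0 -mulrBr mulf_eq0 subr_eq0 => /orP[/eqP // | /eqP/injd eij].
by rewrite eij eqxx in nij.
Qed.

Lemma hessenberg_symmetrizable_tridiagonal G T :
  lower_band 1 T -> (forall i j : 'I_n, i = j.+1 :> nat -> T i j != 0) ->
  is_diag_mx G -> G \in unitmx -> symmetrizer G T -> irreducible_tridiagonal T.
Proof.
move=> T1 subT Gdiag uG TG.
have G0 : lower_band 0 G.
  by move=> i j; rewrite addn0 => ltji; apply/(is_diag_mxP Gdiag); rewrite gtn_eqF.
have /(lower_band0_unitmxP G0) nzG := uG.
have sym := diag_symmetrizerE Gdiag TG.
split=> [i j [ltji | ltij] | i j eij].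
- by apply: T1; rewrite addn1.
- have := sym i j; rewrite (T1 j i) ?addn1 // mul0r => /eqP.
  by rewrite mulf_eq0 (negPf (nzG i)) => /eqP.
- split; first exact: subT.
  have : G j j * T j i != 0 by rewrite sym mulf_neq0 ?subT.
  by rewrite mulf_eq0 negb_or => /andP[].
Qed.

Lemma irreducible_tridiagonal_trmx T :
  irreducible_tridiagonal T -> irreducible_tridiagonal T^T.
Proof.
case=> tri irr; split=> [i j ij | i j eij]; rewrite !mxE.
  by apply: tri; case: ij => ?; [right | left].
by have [] := irr i j eij.
Qed.

Lemma tridiag_diag_basis_trmx Y X Q :
  tridiag_diag_basis Y^T X^T Q -> tridiag_diag_basis Y X (invmx Q)^T.
Proof.
case=> uQ [irrQ diagQ].
have conjE M : invmx (invmx Q)^T *m M *m (invmx Q)^T = (invmx Q *m M^T *m Q)^T.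
  by rewrite !trmx_mul !trmxK mulmxA trmx_inv invmxK.
split; first by rewrite unitmx_tr unitmx_inv.
rewrite !conjE /diagonal is_diag_trmx; split=> //.
exact: irreducible_tridiagonal_trmx.
Qed.

Lemma symmetrizable_tridiag_diag_basis X Y H :
  lower_band 0 X -> injective (fun i => X i i) ->
  lower_band 1 Y -> (forall i j : 'I_n, i = j.+1 :> nat -> Y i j != 0) ->
  H \in unitmx -> symmetrizer H X -> symmetrizer H Y ->
  exists P, tridiag_diag_basis Y X P.
Proof.
move=> X0 injX Y1 subY uH XH YH.
have [P [P0 uP XP]] := lower_band0_diagonalize X0 injX.
set D := diag_mx (\row_i X i i) in XP.
have DX : invmx P *m X *m P = D by rewrite -mulmxA XP mulmxA mulVmx // mul1mx.
have uG : P^T *m H *m P \in unitmx by rewrite !unitmx_mul unitmx_tr uP uH.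
have Gdiag : is_diag_mx (P^T *m H *m P).
  apply: (@commmx_diag_is_diag (\row_i X i i)) => [i j | ].
    by rewrite !mxE; apply: injX.
  by have := symmetrizer_conj uP XH; rewrite /symmetrizer DX tr_diag_mx.
have Pinv0 := lower_band0_invmx P0 uP.
have /(lower_band0_unitmxP Pinv0) nzPinv : invmx P \in unitmx by rewrite unitmx_inv.
have /(lower_band0_unitmxP P0) nzP := uP.
exists P; split=> //; split; last by rewrite DX /diagonal diag_mx_is_diag.
apply: hessenberg_symmetrizable_tridiagonal Gdiag uG (symmetrizer_conj uP YH).
  exact: lower_band_mul (lower_band_mul Pinv0 Y1) P0.
move=> i j eij.
rewrite (lower_band_mul_edge (lower_band_mul Pinv0 Y1) P0 (k := j)) ?addn0 ?addn1 //.
rewrite (lower_band_mul_edge Pinv0 Y1 (k := i)) ?addn0 ?addn1 //.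
by rewrite !mulf_neq0 ?subY.
Qed.

End Symmetrizer.

Section IrreducibleTridiagonal.
Variables (K : fieldType) (d : nat).

Lemma irreducible_tridiagonal_symmetrizer (T : 'M[K]_d.+1) :
  irreducible_tridiagonal T ->
  exists2 s : 'rV[K]_d.+1, (forall i, s 0 i != 0) & symmetrizer (diag_mx s) T.
Proof.
case=> tri irr.
pose t m := T (inord m) (inord m.+1) / T (inord m.+1) (inord m).
pose s := \row_(k < d.+1) \prod_(0 <= m < k) t m.
have offdiag_neq0 m : (m < d)%N ->
    T (inord m.+1) (inord m) != 0 /\ T (inord m) (inord m.+1) != 0.
  by move=> ltmd; apply: irr; rewrite !inordK //; lia.
have step (i j : 'I_d.+1) : j = i.+1 :> nat -> s 0 i * T i j = T j i * s 0 j.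
  move=> eji; have ltid : (i < d)%N by rewrite -ltnS -eji.
  have ei : inord i = i by apply: val_inj; rewrite /= inordK.
  have ej : inord i.+1 = j by apply: val_inj; rewrite /= inordK -eji.
  have [Tji Tij] := offdiag_neq0 i ltid; rewrite ei ej in Tji Tij.
  rewrite !mxE eji big_nat_recr //= /t ei ej.
  by field.
have nzs i : s 0 i != 0.
  rewrite mxE prodf_seq_neq0; apply/allP => m; rewrite mem_index_iota => /andP[_ ltmi].
  have [Tm1m Tmm1] := offdiag_neq0 m (leq_trans ltmi (ltn_ord i)).
  by rewrite mulf_neq0 ?invr_eq0.
clearbody s; exists s => //.
apply/matrixP => i j; rewrite mul_mx_diag mul_diag_mx !mxE.
have [<- | nij] := eqVneq i j; first exact: mulrC.
have [eji | /eqP nji1] := eqVneq (j : nat) i.+1; first by rewrite (step i j eji).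
have [eij | /eqP nij1] := eqVneq (i : nat) j.+1.
  by rewrite mulrC (step j i eij) mulrC.
have /eqP nij0 : (i : nat) != j := nij.
by rewrite !tri ?mulr0 ?mul0r //; lia.
Qed.

Lemma tridiag_diag_basis_symmetrizer (Y X P : 'M[K]_d.+1) :
  tridiag_diag_basis Y X P ->
  exists H, [/\ H \in unitmx, symmetrizer H Y & symmetrizer H X].
Proof.
case=> uP [/irreducible_tridiagonal_symmetrizer[s nzs sT] diagX].
have uS : diag_mx s \in unitmx by rewrite unitmxE unitfE det_diag; apply/prodf_neq0.
have unconj M : invmx (invmx P) *m (invmx P *m M *m P) *m invmx P = M.
  by rewrite invmxK !mulmxA mulmxV // mul1mx -mulmxA mulmxV // mulmx1.
have uPinv : invmx P \in unitmx by rewrite unitmx_inv.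
exists ((invmx P)^T *m diag_mx s *m invmx P); split.
- by rewrite !unitmx_mul unitmx_tr uPinv uS.
- by rewrite -[Y]unconj; apply: symmetrizer_conj.
- by rewrite -[X]unconj; apply: symmetrizer_conj => //; apply: diag_symmetrizer.
Qed.

End IrreducibleTridiagonal.

Section BidiagonalPair.
Variables (K : fieldType) (d : nat) (theta thetas : 'I_d.+1 -> K) (phi : nat -> K).

Lemma matA_lower_band1 : lower_band 1 (matA theta).
Proof.
move=> i j ltji; rewrite mxE; case: eqP => [eij | _]; first by subst; lia.
by case: eqP => // eij; lia.
Qed.

Lemma matA_subdiag_neq0 :
  forall i j : 'I_d.+1, i = j.+1 :> nat -> matA theta i j != 0.
Proof.
move=> i j eij.
have /negPf nij : i != j by apply/eqP => eq_ij; move: eij; rewrite eq_ij; lia.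
by rewrite mxE nij eij eqxx oner_neq0.
Qed.

Lemma trmx_matA_lower_band0 : lower_band 0 (matA theta)^T.
Proof.
move=> i j ltji; rewrite !mxE; case: eqP => [eji | _]; first by subst; lia.
by case: eqP => // eji; lia.
Qed.

Lemma matAs_lower_band0 : lower_band 0 (matAs thetas phi).
Proof.
move=> i j ltji; rewrite mxE; case: eqP => [eij | _]; first by subst; lia.
by case: eqP => // eji; lia.
Qed.

Lemma trmx_matAs_lower_band1 : lower_band 1 (matAs thetas phi)^T.
Proof.
move=> i j ltji; rewrite !mxE; case: eqP => [eji | _]; first by subst; lia.
by case: eqP => // eij; lia.
Qed.

Lemma trmx_matAs_subdiag_neq0 : (forall m, (1 <= m <= d)%N -> phi m != 0) ->
  forall i j : 'I_d.+1, i = j.+1 :> nat -> (matAs thetas phi)^T i j != 0.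
Proof.
move=> nzphi i j eij.
have /negPf nji : j != i by apply/eqP => eq_ji; move: eij; rewrite eq_ji; lia.
rewrite !mxE nji eij eqxx -eij; apply: nzphi; have := ltn_ord i; lia.
Qed.

End BidiagonalPair.

Theorem theorem6p4 (K : fieldType) (d : nat)
    (theta thetas : 'I_d.+1 -> K) (phi : nat -> K)
    (htheta : injective theta) (hthetas : injective thetas)
    (hphi : forall i : nat, (1 <= i <= d)%N -> phi i != 0) :
  leonard_pair (matA theta) (matAs thetas phi) <->
  exists H : 'M[K]_d.+1, H \in unitmx /\
    invmx H *m (matA theta)^T *m H = matA theta /\
    invmx H *m (matAs thetas phi)^T *m H = matAs thetas phi.
Proof.
split=> [[[P basisP] _] |
         [H [uH [/(symmetrizerE _ uH) symA /(symmetrizerE _ uH) symAs]]]].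
  have [H [uH symA symAs]] := tridiag_diag_basis_symmetrizer basisP.
  by exists H; rewrite !symmetrizerE.
have injAs : injective (fun i => matAs thetas phi i i).
  by move=> i j; rewrite !mxE !eqxx => /hthetas.
have injAt : injective (fun i => (matA theta)^T i i).
  by move=> i j; rewrite !mxE !eqxx => /htheta.
have uHinv : invmx H \in unitmx by rewrite unitmx_inv.
split.
  exact: symmetrizable_tridiag_diag_basis (matAs_lower_band0 thetas phi) injAs
    (matA_lower_band1 theta) (matA_subdiag_neq0 theta) uH symAs symA.
have [Q basisQ] := symmetrizable_tridiag_diag_basis (trmx_matA_lower_band0 theta) injAt
  (trmx_matAs_lower_band1 thetas phi) (trmx_matAs_subdiag_neq0 thetas hphi)
  uHinv (symmetrizer_inv uH symA) (symmetrizer_inv uH symAs).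
by exists (invmx Q)^T; apply: tridiag_diag_basis_trmx.
Qed.
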